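(* For every integer $N\ge 3$, the number of tuples $(\mu_1,\mu_2;d_1,d_2)\in P^2\times\mathbb Z^2$ with $d_1+d_2$ odd and $$2|\mu_1|+22|\mu_2|+2\binom{d_1}{2}+22\binom{d_2}{2}+d_1+11d_2=N$$ equals the number of tuples $(\alpha_1,\alpha_2;e_1,e_2)\in P^2\times\mathbb Z^2$ with $e_1+e_2$ odd and $$2|\alpha_1|+22|\alpha_2|+2\binom{e_1}{2}+22\binom{e_2}{2}+3=N.$$
   Context: $P$ denotes the set of all integer partitions into positive parts (including the empty partition); for a partition $\lambda$, $|\lambda|$ is the sum of its parts. For $d\in\mathbb Z$, $\binom{d}{2}=d(d-1)/2$. *)

From HB Require Import structures.
From mathcomp Require Import all_boot all_order all_algebra.
Set Implicit Arguments. Unset Strict Implicit. Unset Printing Implicit Defensive.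
Import Order.TTheory GRing.Theory Num.Theory.

Definition is_partition (s : seq nat) : bool :=
  sorted geq s && all (fun x => 0 < x)%N s.

Definition psize (s : seq nat) : nat := sumn s.

Definition binom2 (d : int) : int := ((d * (d - 1)) %/ 2)%Z.

Local Open Scope ring_scope.

Definition LHS_set (N : int) (x : seq nat * seq nat * int * int) : Prop :=
  let: (mu1, mu2, d1, d2) := x in
  [/\ is_partition mu1, is_partition mu2, ~~ (2 %| d1 + d2)%Z &
      2 * (psize mu1)%:Z + 22 * (psize mu2)%:Z + 2 * binom2 d1
        + 22 * binom2 d2 + d1 + 11 * d2 = N].

Definition RHS_set (N : int) (x : seq nat * seq nat * int * int) : Prop :=
  let: (a1, a2, e1, e2) := x in
  [/\ is_partition a1, is_partition a2, ~~ (2 %| e1 + e2)%Z &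
      2 * (psize a1)%:Z + 22 * (psize a2)%:Z + 2 * binom2 e1
        + 22 * binom2 e2 + 3 = N].

(* Lemma 3.12.  Since 2 binom(d,2) + d = d^2, the left-hand tuples are the
   solutions of 2|mu1| + 22|mu2| + d1^2 + 11 d2^2 = N with d1 + d2 odd, and
   the right-hand ones those of 2|a1| + 22|a2| + e1(e1-1) + 11 e2(e2-1) + 3 = N
   with e1 + e2 odd.  Fixing the partitions, both sides count points of the
   binary form x^2 + 11 y^2 (or its shift) representing the residual k.
   - A lattice computation (classes of x + y modulo 6 and 12, matched by
     explicit linear maps) shows that #LHS(k) - #RHS(k) is twice the signed
     number of representations of k - 1 by a(3a+1) + 11 b(3b+1).
   - Summing over the partitions, this signed count becomes the coefficient
     of q^(N-1) in the product of two copies of Euler's series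
     (sum_j (-1)^j q^(j(3j+1)/2)) / (q)_oo, one in q and one in q^11.
     Euler's pentagonal number theorem, proved with the involution of
     Bressoud and Zeilberger, makes it [N - 1 = 0] = 0.
   All solutions lie in an explicit finite list of candidates, so equal
   counts give the required bijection. *)
From HB Require Import structures.
From mathcomp Require Import all_boot all_order all_algebra.
From mathcomp Require Import zify ring.
From Stdlib Require Import ProofIrrelevance.
Import Order.TTheory GRing.Theory Num.Theory.
Local Open Scope ring_scope.

Lemma bij_of_lists (T : eqType) (P Q : T -> Prop) (s t : seq T) :
  uniq s -> uniq t -> (forall x, P x <-> x \in s) -> (forall y, Q y <-> y \in t) ->
  size s = size t -> exists f : {x | P x} -> {y | Q y}, bijective f.
Proof.
move=> us ut hP hQ st.
have Qf (x : {x | P x}) : Q (nth (proj1_sig x) t (index (proj1_sig x) s)).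
  by apply/hQ; apply: mem_nth; rewrite -st index_mem; apply/hP; exact: proj2_sig.
have Pg (y : {y | Q y}) : P (nth (proj1_sig y) s (index (proj1_sig y) t)).
  by apply/hP; apply: mem_nth; rewrite st index_mem; apply/hQ; exact: proj2_sig.
exists (fun x => exist Q _ (Qf x)); exists (fun y => exist P _ (Pg y)).
- move=> [x Px] /=; apply: subset_eq_compat.
  have xs : x \in s by apply/hP.
  by rewrite index_uniq ?nth_index // -st index_mem.
- move=> [y Qy] /=; apply: subset_eq_compat.
  have yt : y \in t by apply/hQ.
  by rewrite index_uniq ?nth_index // st index_mem.
Qed.

Lemma count_bij (T1 T2 : eqType) (s1 : seq T1) (s2 : seq T2)
    (P : pred T1) (Q : pred T2) (f : T1 -> T2) (g : T2 -> T1) :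
  uniq s1 -> uniq s2 ->
  (forall x, x \in s1 -> P x -> [/\ f x \in s2, Q (f x) & g (f x) = x]) ->
  (forall y, y \in s2 -> Q y -> [/\ g y \in s1, P (g y) & f (g y) = y]) ->
  count P s1 = count Q s2.
Proof.
move=> u1 u2 hf hg; rewrite -!size_filter -(size_map f).
apply: perm_size; apply: uniq_perm; rewrite ?filter_uniq //.
- rewrite map_inj_in_uniq ?filter_uniq // => x y.
  rewrite !mem_filter => /andP[Px xs] /andP[Py ys] fxy.
  by case: (hf x xs Px) => _ _ <-; case: (hf y ys Py) => _ _ <-; rewrite fxy.
move=> y; apply/mapP/idP => [[x]|].
  rewrite mem_filter => /andP[Px xs] ->; case: (hf x xs Px) => ? ? _.
  by rewrite mem_filter; apply/andP.
rewrite mem_filter => /andP[Qy ys]; case: (hg y ys Qy) => gy Pgy fgy.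
by exists (g y); rewrite // mem_filter Pgy.
Qed.

Lemma count_split3 (T : Type) (s : seq T) (P P1 P2 P3 : pred T) :
  (forall x, (P x : nat) = (P1 x + P2 x + P3 x)%N) ->
  count P s = (count P1 s + count P2 s + count P3 s)%N.
Proof. by move=> h; elim: s => [|x s IH] //=; rewrite IH h; lia. Qed.

Lemma count_sumz (T : Type) (s : seq T) (P : pred T) :
  (count P s)%:Z = \sum_(x <- s) (P x)%:Z.
Proof. by elim: s => [|x s IH]; rewrite ?big_nil ?big_cons //= PoszD IH. Qed.

Definition oddz (x : int) : bool := ~~ (2 %| x)%Z.

Definition psign (x : int) : int := if oddz x then -1 else 1.

Lemma psignD a b : psign (a + b) = psign a * psign b.
Proof. by rewrite /psign /oddz; case: ifP => h1; case: ifP => h2; case: ifP => h3; lia. Qed.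

Lemma sum_psign (T : Type) (s : seq T) (P : pred T) (j : T -> int) :
  \sum_(x <- s) psign (j x) * (P x)%:Z =
  (count (fun x => P x && ~~ oddz (j x)) s)%:Z - (count (fun x => P x && oddz (j x)) s)%:Z.
Proof.
elim: s => [|x s IH]; first by rewrite big_nil.
by rewrite big_cons IH /= /psign; case: (P x); case: (oddz (j x)) => /=; lia.
Qed.

Definition zrange (R : nat) : seq int := [seq i%:Z - R%:Z | i <- iota 0 (R + R).+1].

Definition zbox (R : nat) : seq (int * int) := [seq (x, y) | x <- zrange R, y <- zrange R].

Lemma mem_zrange R x : (x \in zrange R) = (`|x| <= R%:Z).
Proof.
apply/mapP/idP => [[i]|hx]; first by rewrite mem_iota => /andP[_ hi] ->; lia.
exists (absz (x + R%:Z)); last by lia.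
by rewrite mem_iota; apply/andP; split; lia.
Qed.

Lemma uniq_zrange R : uniq (zrange R).
Proof. by rewrite map_inj_uniq ?iota_uniq // => i j; lia. Qed.

Lemma mem_zbox R z : (z \in zbox R) = (`|z.1| <= R%:Z) && (`|z.2| <= R%:Z).
Proof.
apply/allpairsP/idP => [[[x y] [/= hx hy ->]]|]; first by rewrite -!mem_zrange hx hy.
by case: z => x y /andP[hx hy]; exists (x, y); rewrite /= !mem_zrange.
Qed.

Lemma uniq_zbox R : uniq (zbox R).
Proof. by apply: allpairs_uniq; rewrite ?uniq_zrange // => [[a b] [c d]] _ _. Qed.

Lemma box_count_bij R (P Q : pred (int * int)) (f g : int * int -> int * int) :
  (forall z, P z -> z \in zbox R) -> (forall z, Q z -> z \in zbox R) ->
  (forall z, P z -> Q (f z) /\ g (f z) = z) ->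
  (forall z, Q z -> P (g z) /\ f (g z) = z) ->
  count P (zbox R) = count Q (zbox R).
Proof.
move=> boxP boxQ hf hg; apply: (@count_bij _ _ _ _ _ _ f g); rewrite ?uniq_zbox //.
- by move=> z _ Pz; have [Qf fK] := hf z Pz; split; first exact: boxQ Qf.
- by move=> z _ Qz; have [Pg gK] := hg z Qz; split; first exact: boxP Pg.
Qed.

Local Notation pos := (fun y : nat => (0 < y)%N).
Local Notation gt1 := (fun y : nat => (1 < y)%N).

Section Partitions.
Local Open Scope nat_scope.
Implicit Types (h m : nat) (l s : seq nat).

Lemma partition_cons h l : is_partition (h :: l) =
  [&& 0 < h, all (fun y => y <= h) l & is_partition l].
Proof.
rewrite /is_partition /= path_sortedE; last exact: (rev_trans leq_trans).
by case: (0 < h); case: (all _ l); case: (sorted _ l); case: (all _ l).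
Qed.

Lemma partition_pos {l} : is_partition l -> all pos l.
Proof. by case/andP. Qed.

Lemma sumn_predn {l} : all pos l -> sumn (map predn l) + size l = sumn l.
Proof. by elim: l => [|x l IH] //= /andP[hx hl]; rewrite -(IH hl); lia. Qed.

Lemma sumn_succn l : sumn (map succn l) = sumn l + size l.
Proof. by elim: l => [|x l IH] //=; rewrite IH; lia. Qed.

Lemma sumn_filter_pos s : sumn (filter pos s) = sumn s.
Proof. by elim: s => [|[|x] s IH] //=; rewrite IH. Qed.

Lemma size_le_sumn {s} : all pos s -> size s <= sumn s.
Proof. by elim: s => [|x s IH] //= /andP[hx /IH]; lia. Qed.

Lemma mem_le_sumn {s x} : x \in s -> x <= sumn s.
Proof. by elim: s => [|y s IH] //=; rewrite inE => /orP[/eqP ->|/IH]; lia. Qed.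

Lemma filter_pos_predn {l} : all pos l ->
  filter pos (map predn l) = map predn (filter gt1 l).
Proof. by elim: l => [|[|[|x]] l IH] //= hl; rewrite IH. Qed.

Lemma map_succn_predn {l} : all gt1 l -> map succn (map predn l) = l.
Proof. by elim: l => [|[|[|x]] l IH] //= hl; rewrite IH. Qed.

Lemma all_ones_nseq {l} : all (fun y => 0 < y <= 1) l -> l = nseq (size l) 1.
Proof. by elim: l => [|[|[|x]] l IH] //= hl; rewrite -IH. Qed.

Lemma partition_split {l} : is_partition l -> l = filter gt1 l ++ nseq (count_mem 1 l) 1.
Proof.
elim: l => [|h l IH] //; rewrite partition_cons => /and3P[hh hl pl].
case: (ltnP 1 h) => h1 /=.
  by rewrite h1 (_ : (h == 1) = false) /= -?IH //; apply/negbTE; lia.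
have -> : h = 1 by lia.
have ones : all (fun y => 0 < y <= 1) l.
  apply/allP => x xl; move/allP: hl => /(_ x xl).
  by move/allP: (partition_pos pl) => /(_ x xl) /=; lia.
have -> : filter gt1 l = [::].
  by apply/eqP; rewrite -[_ == _]negbK -has_filter; apply/hasPn => x /(allP ones); lia.
rewrite /= {1}(all_ones_nseq ones); congr (_ :: nseq _ _).
by elim: l ones {IH hl pl} => [|[|[|x]] l IH] //= /IH ->.
Qed.

Lemma size_pos_split {l} : all pos l -> size l = count gt1 l + count_mem 1 l.
Proof. by elim: l => [|[|[|x]] l IH] //= /IH ->; rewrite ?add0n ?add1n ?addnS ?addSn. Qed.

Lemma partition_cat_ones s m : is_partition s -> is_partition (s ++ nseq m 1).
Proof.
elim: s => [_|x s IH].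
  by rewrite /is_partition all_nseq orbT andbT; elim: m => [|[|m] IH] //=.
rewrite /= !partition_cons => /and3P[hx hs ps]; rewrite hx all_cat hs IH // andbT.
by apply/allP => y /nseqP [-> _].
Qed.

Lemma partition_succn l : is_partition l -> is_partition (map succn l).
Proof.
case/andP=> sl _; rewrite /is_partition all_map; apply/andP; split; last exact/allP.
by apply: (homo_sorted _ _ sl) => a b /=; rewrite ltnS.
Qed.

Lemma partition_filter_pos s : sorted geq s -> is_partition (filter pos s).
Proof.
by move=> ss; rewrite /is_partition filter_all sorted_filter //; exact: (rev_trans leq_trans).
Qed.

Lemma sorted_predn_cons c h l : h.-1 <= c -> is_partition (h :: l) ->
  sorted geq (c :: map predn (h :: l)).
Proof.
move=> hc /andP[sl _]; rewrite /= hc /=.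
by apply: (homo_sorted _ _ sl) => a b /=; case: a; case: b => //= a b; rewrite ltnS.
Qed.

Fixpoint bounded_seqs n K : seq (seq nat) :=
  if n is n'.+1 then [::] :: [seq x :: s | x <- iota 1 K, s <- bounded_seqs n' K]
  else [:: [::]].

Lemma mem_bounded_seqs n K s :
  (s \in bounded_seqs n K) = (size s <= n) && all (fun x => 0 < x <= K) s.
Proof.
elim: n s => [|n IH] [|x s] //=; rewrite in_cons /=; apply/allpairsP/idP.
  move=> [[a b] /= [ha hb [-> ->]]]; rewrite mem_iota in ha; rewrite IH in hb.
  move: hb => /andP[h1 h2]; rewrite h2 andbT ltnS h1 /=.
  by rewrite add1n ltnS in ha.
move=> /andP[hs /andP[hx ha]]; exists (x, s); split => //=.
  by rewrite mem_iota add1n ltnS.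
by rewrite IH -ltnS hs ha.
Qed.

Lemma uniq_bounded_seqs n K : uniq (bounded_seqs n K).
Proof.
elim: n => [|n IH] //=; apply/andP; split; first by apply/allpairsP => [[[a b] [_ _]]].
by apply: allpairs_uniq; rewrite ?iota_uniq // => [[a b] [c d]] _ _ /= [-> ->].
Qed.

Definition partitions_upto K : seq (seq nat) :=
  filter (fun s => is_partition s && (sumn s <= K)) (bounded_seqs K K).

Lemma mem_partitions_upto K s :
  (s \in partitions_upto K) = is_partition s && (sumn s <= K).
Proof.
rewrite mem_filter mem_bounded_seqs; case ps: (is_partition s); case: leqP => //= hs.
rewrite (leq_trans (size_le_sumn (partition_pos ps))) //=.
apply/allP => x xs; move/allP: (partition_pos ps) => /(_ x xs) /= ->.
by rewrite (leq_trans (mem_le_sumn xs)).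
Qed.

Lemma uniq_partitions_upto K : uniq (partitions_upto K).
Proof. by rewrite filter_uniq // uniq_bounded_seqs. Qed.

End Partitions.

(* Twice the generalized pentagonal number j(3j+1)/2, and the weight of a
   pair (j, lambda) in Euler's identity
     (sum_j (-1)^j q^(j(3j+1)/2)) * (sum_lambda q^|lambda|) = 1,
   doubled so as to stay integral. *)
Definition pent (j : int) : int := j * (3 * j + 1).

Definition euler_weight (x : int * seq nat) : int := 2 * (sumn x.2)%:Z + pent x.1.

Lemma abs_le_pent (j : int) : `|j| <= pent j.
Proof. by rewrite /pent; case: (lerP 0 j) => h; nia. Qed.

Lemma euler_weight_ge0 x : 0 <= euler_weight x.
Proof. by case: x => j l; rewrite /euler_weight /=; have := abs_le_pent j; lia. Qed.

(* The involution of Bressoud and Zeilberger on pairs (j, lambda).  It preserves the weight, flips the parity of j and fixes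
   only (0, empty). *)
Definition bz (x : int * seq nat) : int * seq nat :=
  let: (j, l) := x in
  if l is h :: l' then
    if h%:Z <= (size l)%:Z + 3 * j then
      (j - 1, filter pos (absz ((size l)%:Z + 3 * j - 1)%R :: map predn l))
    else (j + 1, map succn l' ++ nseq (absz (h%:Z - (size l)%:Z - 3 * j - 1)%R) 1%N)
  else if j < 0 then (j + 1, nseq (absz (- (3 * j) - 2)) 1%N)
  else (j - 1, [:: absz (3 * j - 1)%R]).

Lemma bz_shrinkE j h l : h%:Z <= (size (h :: l))%:Z + 3 * j ->
  bz (j, h :: l) =
  (j - 1, filter pos (absz ((size (h :: l))%:Z + 3 * j - 1)%R :: map predn (h :: l))).
Proof. by move=> hc /=; rewrite ifT. Qed.

Lemma bz_shrink {j h l'} : is_partition (h :: l') ->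
  h%:Z <= (size l').+1%:Z + 3 * j ->
  [/\ is_partition (bz (j, h :: l')).2, euler_weight (bz (j, h :: l')) = euler_weight (j, h :: l'),
      (bz (j, h :: l')).1 = j - 1 & bz (bz (j, h :: l')) = (j, h :: l')].
Proof.
move=> pl hc; set l := h :: l' in pl *.
set c := absz ((size l)%:Z + 3 * j - 1)%R.
have hh : (0 < h)%N by move: pl; rewrite partition_cons => /and3P[].
have hcz : c%:Z = (size l)%:Z + 3 * j - 1 by rewrite /c /l /=; lia.
have -> : bz (j, l) = (j - 1, filter pos (c :: map predn l)) by rewrite /= hc.
have sl : sorted geq (c :: map predn l).
  by apply: sorted_predn_cons => //; rewrite /l /= in hcz; lia.
have El : l = h :: l' by [].
clearbody c l; split => //; first exact: partition_filter_pos.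
  rewrite /euler_weight /pent sumn_filter_pos /= -(sumn_predn (partition_pos pl)); nia.
have fl : filter pos (map predn l) = map predn (filter gt1 l).
  exact: filter_pos_predn (partition_pos pl).
have hsz := size_pos_split (partition_pos pl).
have [c0|cpos] := posnP c.
- have ones : all (fun y => (0 < y <= 1)%N) l.
    have h1 : h = 1%N by rewrite El /= in hcz; lia.
    move: (pl); rewrite El partition_cons h1 /= => /andP[/allP hmax /partition_pos /allP hpos].
    by apply/allP => y yl; have := hmax y yl; have := hpos y yl; lia.
  have -> : filter pos (c :: map predn l) = [::].
    by rewrite c0 (all_ones_nseq ones) /=; elim: (size l).
  rewrite /= (_ : j - 1 < 0); last by lia.
  by congr pair; [ring | rewrite [RHS](all_ones_nseq ones); congr nseq; lia].
- rewrite /= cpos fl /= size_map size_filter.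
  rewrite (_ : c%:Z <= (count gt1 l).+1%:Z + 3 * (j - 1) = false); last by lia.
  rewrite map_succn_predn ?filter_all //; congr pair; first by ring.
  by rewrite [RHS](partition_split pl); congr (_ ++ nseq _ _); lia.
Qed.

Lemma bz_grow {j h l'} : is_partition (h :: l') ->
  (size l').+1%:Z + 3 * j < h%:Z ->
  [/\ is_partition (bz (j, h :: l')).2, euler_weight (bz (j, h :: l')) = euler_weight (j, h :: l'),
      (bz (j, h :: l')).1 = j + 1 & bz (bz (j, h :: l')) = (j, h :: l')].
Proof.
move=> pl hc; set m := absz (h%:Z - (size l').+1%:Z - 3 * j - 1)%R.
have hmz : m%:Z = h%:Z - (size l').+1%:Z - 3 * j - 1 by rewrite /m; lia.
set nu := map succn l' ++ nseq m 1%N.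
have -> : bz (j, h :: l') = (j + 1, nu) by rewrite /= ifF //; apply/negbTE; rewrite -ltNge.
move: (pl); rewrite partition_cons => /and3P[hh hmax pl'].
split => //.
- by apply: partition_cat_ones; apply: partition_succn.
- by rewrite /euler_weight /pent /= sumn_cat sumn_succn sumn_nseq; nia.
have nu_pred : map predn nu = l' ++ nseq m 0%N by rewrite map_cat map_nseq -map_comp map_id.
have nu_size : size nu = (size l' + m)%N by rewrite size_cat size_map size_nseq.
have nu_max : all (fun y => y <= h.+1)%N nu.
  rewrite all_cat all_map all_nseq; apply/andP; split; first by apply/allP => y /(allP hmax).
  by case: (m).
case Enu : nu => [|y nu'].
- move/esym/eqP: nu_size; rewrite Enu addn_eq0 => /andP[/eqP/size0nil l0 /eqP m0].
  rewrite l0 m0 /= in hmz *; rewrite ifF; last by lia.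
  by congr (_, [:: _]); [ring | lia].
- have hy : (y <= h.+1)%N by move: nu_max; rewrite Enu => /andP[].
  rewrite bz_shrinkE -Enu nu_size; last by lia.
  rewrite nu_pred (_ : absz _ = h); last by lia.
  rewrite /= hh filter_cat filter_nseq /= cats0; congr (_, _ :: _); first by ring.
  exact/all_filterP/(partition_pos pl').
Qed.

Lemma bz_empty j : j != 0 ->
  [/\ is_partition (bz (j, [::])).2, euler_weight (bz (j, [::])) = euler_weight (j, [::]),
      oddz (bz (j, [::])).1 = ~~ oddz j & bz (bz (j, [::])) = (j, [::])].
Proof.
move=> j0; have [jneg|jpos] := ltrP j 0.
- set n := absz (- (3 * j) - 2)%R.
  have hn : n%:Z = - (3 * j) - 2 by rewrite /n; lia.
  have -> : bz (j, [::]) = (j + 1, nseq n 1%N) by rewrite /= jneg.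
  split; first exact: (partition_cat_ones [::]).
  - by rewrite /euler_weight /pent /= sumn_nseq; nia.
  - by rewrite /oddz /=; lia.
  case En : n hn => [|n'] hn; first by lia.
  rewrite -[nseq _ _]/(1%N :: nseq n' 1%N) bz_shrinkE /= ?size_nseq; last by lia.
  rewrite (_ : absz _ = 0%N); last by lia.
  by rewrite /= map_nseq filter_nseq; congr pair; ring.
- set c := absz (3 * j - 1)%R.
  have hc : c%:Z = 3 * j - 1 by rewrite /c; lia.
  have -> : bz (j, [::]) = (j - 1, [:: c]) by rewrite /= ifF //; lia.
  split.
  - by rewrite /is_partition /= andbT; lia.
  - by rewrite /euler_weight /pent /=; nia.
  - by rewrite /oddz /=; lia.
  rewrite /= ifF; last by lia.
  by rewrite (_ : absz _ = 0%N); [congr pair; ring | lia].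
Qed.

Lemma bz_spec {x} : is_partition x.2 -> x != (0, [::]) ->
  [/\ is_partition (bz x).2, euler_weight (bz x) = euler_weight x,
      oddz (bz x).1 = ~~ oddz x.1 & bz (bz x) = x].
Proof.
case: x => j [|h l] pl hx.
  by apply: bz_empty; apply: contraNneq hx => ->.
have [hc|hc] := lerP h%:Z ((size l).+1%:Z + 3 * j).
  by have [? ? -> ?] := bz_shrink pl hc; split => //; rewrite /oddz /=; lia.
by have [? ? -> ?] := bz_grow pl hc; split => //; rewrite /oddz /=; lia.
Qed.

Definition euler_domain (R K : nat) : seq (int * seq nat) :=
  [seq (j, l) | j <- zrange R, l <- partitions_upto K].

Lemma mem_euler_domain R K x :
  (x \in euler_domain R K) = (`|x.1| <= R%:Z) && is_partition x.2 && (sumn x.2 <= K)%N.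
Proof.
apply/allpairsP/idP => [[[a b] /= [ha hb ->]]|].
  by rewrite -mem_zrange ha -mem_partitions_upto.
case: x => a b /= /andP[/andP[ha pb] hb]; exists (a, b) => //.
by rewrite mem_zrange mem_partitions_upto pb.
Qed.

Lemma uniq_euler_domain R K : uniq (euler_domain R K).
Proof.
apply: allpairs_uniq; rewrite ?uniq_zrange ?uniq_partitions_upto //.
by move=> [a b] [c d] _ _ /= [-> ->].
Qed.

Lemma euler_domain_complete R K x : is_partition x.2 ->
  euler_weight x <= 2 * K%:Z -> 2 * K%:Z <= R%:Z -> x \in euler_domain R K.
Proof.
case: x => j l /= pl; rewrite /euler_weight /= => hw hR.
by rewrite mem_euler_domain /= pl; have := abs_le_pent j; lia.
Qed.

Lemma euler_weight_eq0 {x} : is_partition x.2 -> euler_weight x = 0 -> x = (0, [::]).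
Proof.
case: x => j l /= pl; rewrite /euler_weight /= => hw.
have hj := abs_le_pent j; have hs := size_le_sumn (partition_pos pl).
have -> : j = 0 by lia.
by rewrite (size0nil (_ : size l = 0%N)) //; lia.
Qed.

Theorem euler_pentagonal R K T : T <= 2 * K%:Z -> 2 * K%:Z <= R%:Z ->
  \sum_(x <- euler_domain R K) psign x.1 * (euler_weight x == T)%:Z = (T == 0)%:Z.
Proof.
move=> hT hR; rewrite (sum_psign _ _ (fun x => euler_weight x == T) (fun x => x.1)).
have domP x : x \in euler_domain R K -> is_partition x.2.
  by rewrite mem_euler_domain => /andP[/andP[]].
have [->|T0] := eqVneq T 0.
  rewrite (eq_in_count (a2 := pred1 (0, [::]))) ?count_uniq_mem ?uniq_euler_domain //.
  - rewrite (_ : count _ _ = 0%N) ?mem_euler_domain //=.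
    apply/eqP; rewrite -leqn0 leqNgt -has_count; apply/hasPn => x /domP px.
    by apply/negP => /andP[/eqP /(euler_weight_eq0 px) ->].
  move=> x /domP px /=; apply/idP/eqP => [/andP[/eqP /(euler_weight_eq0 px)] //|->].
  by rewrite eqxx.
have bz_dom x : x \in euler_domain R K -> euler_weight x = T ->
    [/\ bz x \in euler_domain R K, euler_weight (bz x) = T,
        oddz (bz x).1 = ~~ oddz x.1 & bz (bz x) = x].
  move=> /domP px w; have xn : x != (0, [::]) by apply: contra_neq T0 => ex; rewrite -w ex.
  have [pb wb pa bzK] := bz_spec px xn; split; rewrite ?wb //.
  by apply: euler_domain_complete; rewrite ?wb ?w.
rewrite (@count_bij _ _ (euler_domain R K) (euler_domain R K) _
    (fun x => (euler_weight x == T) && oddz x.1) bz bz)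
  ?uniq_euler_domain ?subrr // => x xD /andP[/eqP w o]; have [? wb -> ?] := bz_dom x xD w.
- by split; rewrite // wb eqxx.
- by split; rewrite // wb eqxx negbK.
Qed.

Lemma euler_pentagonal_scaled R K (c w M : int) : 0 < c -> 0 <= w ->
  M <= 2 * K%:Z -> 2 * K%:Z <= R%:Z ->
  \sum_(x <- euler_domain R K) psign x.1 * (w + c * euler_weight x == M)%:Z = (w == M)%:Z.
Proof.
move=> c0 w0 hM hR; have [/dvdzP [q hq] | ndiv] := boolP (c %| M - w)%Z.
  rewrite (eq_bigr (fun x => psign x.1 * (euler_weight x == q)%:Z)); last first.
    move=> x _; congr (_ * (_ : bool)%:Z); apply/eqP/eqP => [h|->]; last by lia.
    by apply: (mulfI (lt0r_neq0 c0)); lia.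
  rewrite euler_pentagonal //; last by nia.
  by congr (_ : bool)%:Z; apply/eqP/eqP => h; [apply: (mulfI (lt0r_neq0 c0)) |]; lia.
rewrite big1 => [|x _]; last first.
  rewrite (_ : (_ == M) = false) ?mulr0 //; apply/negbTE; apply: contra ndiv => /eqP <-.
  by rewrite addrC addKr dvdz_mulr.
rewrite (_ : (w == M) = false) //; apply/negbTE; apply: contra ndiv => /eqP <-.
by rewrite subrr dvdz0.
Qed.

Definition qf (z : int * int) : int := z.1 * z.1 + 11 * (z.2 * z.2).

Definition shifted_qf (z : int * int) : int := z.1 * (z.1 - 1) + 11 * (z.2 * (z.2 - 1)) + 3.

Definition pent_qf (z : int * int) : int := pent z.1 + 11 * pent z.2.

(* Each form dominates the coordinates, so its solutions below R lie in the
   box of radius R. *)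
Lemma abs_le_sq (x : int) : `|x| <= x * x.
Proof. by case: (lerP 0 x) => ?; nia. Qed.

Lemma abs_le_shift (x : int) : 0 <= x * (x - 1) /\ `|x| <= x * (x - 1) + 1.
Proof. by case: (lerP 0 x) => ?; split; nia. Qed.

Lemma qf_inbox R z : qf z <= R%:Z -> z \in zbox R.
Proof.
case: z => x y; rewrite mem_zbox /qf /=.
by have := abs_le_sq x; have := abs_le_sq y; lia.
Qed.

Lemma shifted_qf_inbox R z : shifted_qf z <= R%:Z -> z \in zbox R.
Proof.
case: z => x y; rewrite mem_zbox /shifted_qf /=.
by have [? ?] := abs_le_shift x; have [? ?] := abs_le_shift y; lia.
Qed.

Lemma pent_qf_inbox R z : pent_qf z <= R%:Z -> z \in zbox R.
Proof.
case: z => x y; rewrite mem_zbox /pent_qf /=.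
by have := abs_le_pent x; have := abs_le_pent y; lia.
Qed.

Definition sum_mod (m r : int) (z : int * int) : bool := ((z.1 + z.2) %% m == r)%Z.

Definition qf_count (R : nat) (c : int) (P : pred (int * int)) : nat :=
  count (fun z => (qf z == c) && P z) (zbox R).

Definition shifted_count (R : nat) (k : int) : nat :=
  count (fun z => (shifted_qf z == k) && oddz (z.1 + z.2)) (zbox R).

Definition pent_signed (R : nat) (j : int) : int :=
  \sum_(z <- zbox R) psign (z.1 + z.2) * (pent_qf z == j)%:Z.

Lemma qf_count_bij R c c' (P Q : pred (int * int)) (f g : int * int -> int * int) :
  c <= R%:Z -> c' <= R%:Z ->
  (forall z, qf z = c -> P z -> [/\ qf (f z) = c', Q (f z) & g (f z) = z]) ->
  (forall z, qf z = c' -> Q z -> [/\ qf (g z) = c, P (g z) & f (g z) = z]) ->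
  qf_count R c P = qf_count R c' Q.
Proof.
move=> hc hc' hf hg; apply: (@box_count_bij R _ _ f g).
- by move=> z /andP[/eqP e _]; apply: qf_inbox; rewrite e.
- by move=> z /andP[/eqP e _]; apply: qf_inbox; rewrite e.
- by move=> z /andP[/eqP e Pz]; have [-> -> ->] := hf z e Pz; rewrite eqxx.
- by move=> z /andP[/eqP e Qz]; have [-> -> ->] := hg z e Qz; rewrite eqxx.
Qed.

Lemma qf_count_neg R c P : c <= R%:Z ->
  qf_count R c P = qf_count R c (fun z => P (- z.1, - z.2)).
Proof.
pose neg z : int * int := (- z.1, - z.2).
by move=> hc; apply: (@qf_count_bij R c c P _ neg neg) => // -[x y] e Pz;
  rewrite /neg /= !opprK; split => //; rewrite -e /qf /=; ring.
Qed.

Section LatticeIdentity.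
Variables (R : nat) (k : int).
Hypothesis hR : 4 * `|k| <= R%:Z.

Let A (r : int) := qf_count R k (sum_mod 6 r).
Let C (r : int) := qf_count R (4 * k) (fun z => oddz z.2 && sum_mod 12 r z).

Lemma odd_classes : qf_count R k (fun z => oddz (z.1 + z.2)) = (A 1 + A 3 + A 5)%N.
Proof.
apply: count_split3 => z; rewrite /sum_mod /oddz.
by case: (qf z == k) => //=; lia.
Qed.

(* (e1, e2) |-> (2e1 - 1, 1 - 2e2) turns the right-hand form into
   x^2 + 11 y^2 = 4k with x, y odd and x + y = 2 mod 4. *)
Lemma shifted_to_qf :
  shifted_count R k = qf_count R (4 * k) (fun z => oddz z.2 && sum_mod 4 2 z).
Proof.
apply: (@box_count_bij R _ _ (fun z => (2 * z.1 - 1, 1 - 2 * z.2))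
                             (fun z => (((z.1 + 1) %/ 2)%Z, ((1 - z.2) %/ 2)%Z))).
- by move=> z /andP[/eqP e _]; apply: shifted_qf_inbox; lia.
- by move=> z /andP[/eqP e _]; apply: qf_inbox; lia.
- move=> [a b] /andP[/eqP e o]; rewrite /sum_mod /oddz /= in o *.
  have -> : qf (2 * a - 1, 1 - 2 * b) = 4 * k by rewrite -e /qf /shifted_qf /=; ring.
  by split; [rewrite eqxx /=; lia | congr pair; lia].
- move=> [p r] /andP[/eqP e /andP[o m]]; rewrite /sum_mod /oddz /= in o m *.
  set a := ((p + 1) %/ 2)%Z; have hp : p = 2 * a - 1 by rewrite /a; lia.
  set b := ((1 - r) %/ 2)%Z; have hr : r = 1 - 2 * b by rewrite /b; lia.
  clearbody a b; subst p r.
  have -> : shifted_qf (a, b) = k.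
    by apply: (@mulfI _ 4) => //; rewrite -e /qf /shifted_qf /=; ring.
  by split; [rewrite eqxx /=; lia | congr pair; lia].
Qed.

Lemma rescaled_classes :
  qf_count R (4 * k) (fun z => oddz z.2 && sum_mod 4 2 z) = (C 2 + C 6 + C 10)%N.
Proof.
apply: count_split3 => z; rewrite /sum_mod /oddz.
by case: (qf z == 4 * k) => //=; lia.
Qed.

Lemma A1_A5 : A 1 = A 5.
Proof. by rewrite /A qf_count_neg; [apply: eq_count => z; rewrite /sum_mod /=; lia | lia]. Qed.

Lemma C2_C10 : C 2 = C 10.
Proof.
by rewrite /C qf_count_neg; [apply: eq_count => z; rewrite /sum_mod /oddz /=; lia | lia].
Qed.

(* With x + y = 3s, the map (x, y) |-> (5s + 2y, s - 2y) multiplies the form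
   by 4 and matches the class 3 mod 6 with the class 6 mod 12. *)
Lemma A3_C6 : A 3 = C 6.
Proof.
apply: (@qf_count_bij R k (4 * k) _ _
  (fun z => let s := ((z.1 + z.2) %/ 3)%Z in (5 * s + 2 * z.2, s - 2 * z.2))
  (fun z => let s := ((z.1 + z.2) %/ 6)%Z in let y := ((s - z.2) %/ 2)%Z in (3 * s - y, y)));
  try lia.
- move=> [x y] e; rewrite /sum_mod /oddz /= => m.
  set s := ((x + y) %/ 3)%Z; have hx : x = 3 * s - y by rewrite /s; lia.
  clearbody s; subst x; split; last by congr pair; lia.
  + by rewrite -e /qf /=; ring.
  + by lia.
- move=> [p r] e; rewrite /sum_mod /oddz /= => /andP[o m].
  set s := ((p + r) %/ 6)%Z; have hp : p = 6 * s - r by rewrite /s; lia.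
  set y := ((s - r) %/ 2)%Z; have hr : r = s - 2 * y by rewrite /y; lia.
  clearbody s y; subst p r.
  split; [ | lia | congr pair; lia].
  by apply: (@mulfI _ 4) => //; rewrite -e /qf /=; ring.
Qed.

Lemma pent_even : count (fun z => (pent_qf z == k - 1) && ~~ oddz (z.1 + z.2)) (zbox R) = A 1.
Proof.
apply: (@box_count_bij R _ _
   (fun z => let y := ((z.2 - z.1) %/ 2)%Z in (6 * z.2 + 1 - y, y))
   (fun z => let b := ((z.1 + z.2 - 1) %/ 6)%Z in (b - 2 * z.2, b))).
- by move=> z /andP[/eqP e _]; apply: pent_qf_inbox; lia.
- by move=> z /andP[/eqP e _]; apply: qf_inbox; lia.
- move=> [a b] /andP[/eqP e m] /=; rewrite /oddz /= negbK in m.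
  set y := ((b - a) %/ 2)%Z; have ha : a = b - 2 * y by rewrite /y; lia.
  clearbody y; subst a.
  have -> : qf (6 * b + 1 - y, y) = k.
    by rewrite -[k](subrK 1) -e /qf /pent_qf /pent /=; ring.
  by split; [rewrite eqxx /sum_mod /=; lia | congr pair; lia].
- move=> [x y] /andP[/eqP e m] /=; rewrite /sum_mod /= in m.
  set b := ((x + y - 1) %/ 6)%Z; have hx : x = 6 * b + 1 - y by rewrite /b; lia.
  clearbody b; subst x.
  have -> : pent_qf (b - 2 * y, b) = k - 1 by rewrite -e /qf /pent_qf /pent /=; ring.
  by split; [rewrite eqxx /oddz /=; lia | congr pair; lia].
Qed.

Lemma pent_odd : count (fun z => (pent_qf z == k - 1) && oddz (z.1 + z.2)) (zbox R) = C 2.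
Proof.
apply: (@box_count_bij R _ _
   (fun z => (11 * z.2 + z.1 + 2, z.2 - z.1))
   (fun z => let b := ((z.1 + z.2 - 2) %/ 12)%Z in (b - z.2, b))).
- by move=> z /andP[/eqP e _]; apply: pent_qf_inbox; lia.
- by move=> z /andP[/eqP e _]; apply: qf_inbox; lia.
- move=> [a b] /andP[/eqP e m] /=; rewrite /oddz /= in m.
  have -> : qf (11 * b + a + 2, b - a) = 4 * k.
    by rewrite -[k](subrK 1) -e /qf /pent_qf /pent /=; ring.
  by split; [rewrite eqxx /sum_mod /oddz /=; lia | congr pair; lia].
- move=> [p r] /andP[/eqP e /andP[o m]] /=; rewrite /sum_mod /oddz /= in o m.
  set b := ((p + r - 2) %/ 12)%Z; have hp : p = 11 * b + (b - r) + 2 by rewrite /b; lia.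
  clearbody b; subst p.
  have -> : pent_qf (b - r, b) = k - 1.
    by apply: (@mulfI _ 4) => //; rewrite mulrBr -e /qf /pent_qf /pent /=; ring.
  by split; [rewrite eqxx /oddz /=; lia | congr pair; lia].
Qed.

Lemma lattice_identity :
  (qf_count R k (fun z => oddz (z.1 + z.2)))%:Z - (shifted_count R k)%:Z =
  2 * pent_signed R (k - 1).
Proof.
rewrite /pent_signed (sum_psign _ _ (fun z => pent_qf z == k - 1) (fun z => z.1 + z.2)).
rewrite pent_even pent_odd odd_classes shifted_to_qf rescaled_classes -A1_A5 -C2_C10 A3_C6.
lia.
Qed.

End LatticeIdentity.

Lemma binom2E (d : int) : 2 * binom2 d = d * (d - 1).
Proof.
rewrite /binom2; have /dvdzP [c ->] : (2 %| d * (d - 1))%Z.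
  have [q [->|->]] : exists q, d = 2 * q \/ d = 2 * q + 1 by exists (d %/ 2)%Z; lia.
  - by apply/dvdzP; exists (q * (2 * q - 1)); ring.
  - by apply/dvdzP; exists ((2 * q + 1) * q); ring.
by rewrite mulzK // mulrC.
Qed.

Definition LHSb (N : int) (x : seq nat * seq nat * int * int) : bool :=
  let: (mu1, mu2, d1, d2) := x in
  [&& is_partition mu1, is_partition mu2, ~~ (2 %| d1 + d2)%Z &
      2 * (psize mu1)%:Z + 22 * (psize mu2)%:Z + 2 * binom2 d1
        + 22 * binom2 d2 + d1 + 11 * d2 == N].

Definition RHSb (N : int) (x : seq nat * seq nat * int * int) : bool :=
  let: (a1, a2, e1, e2) := x in
  [&& is_partition a1, is_partition a2, ~~ (2 %| e1 + e2)%Z &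
      2 * (psize a1)%:Z + 22 * (psize a2)%:Z + 2 * binom2 e1
        + 22 * binom2 e2 + 3 == N].

Lemma LHS_setP N x : reflect (LHS_set N x) (LHSb N x).
Proof.
case: x => [[[a b] c] d] /=; apply: (iffP and4P) => [[? ? ? /eqP ?]|[? ? ? ?]] //.
by split=> //; apply/eqP.
Qed.

Lemma RHS_setP N x : reflect (RHS_set N x) (RHSb N x).
Proof.
case: x => [[[a b] c] d] /=; apply: (iffP and4P) => [[? ? ? /eqP ?]|[? ? ? ?]] //.
by split=> //; apply/eqP.
Qed.

Definition partition_pairs (K : nat) : seq (seq nat * seq nat) :=
  [seq (a, b) | a <- partitions_upto K, b <- partitions_upto K].

Definition candidates (K R : nat) : seq (seq nat * seq nat * int * int) :=
  [seq (m.1, m.2, d.1, d.2) | m <- partition_pairs K, d <- zbox R].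

Lemma mem_partition_pairs K m :
  (m \in partition_pairs K) = (m.1 \in partitions_upto K) && (m.2 \in partitions_upto K).
Proof.
apply/allpairsP/idP => [[[a b] /= [ha hb ->]]|]; first by rewrite ha hb.
by case: m => a b /andP[ha hb]; exists (a, b).
Qed.

Lemma mem_candidates K R a b c d : ((a, b, c, d) \in candidates K R) =
  [&& a \in partitions_upto K, b \in partitions_upto K & (c, d) \in zbox R].
Proof.
apply/allpairsP/idP => [[[m z] /= [hm hz [-> -> -> ->]]]|/and3P[ha hb hz]].
  by move: hm; rewrite mem_partition_pairs => /andP[-> ->]; case: z hz.
by exists ((a, b), (c, d)); rewrite mem_partition_pairs ha hb.
Qed.

Lemma uniq_candidates K R : uniq (candidates K R).
Proof.
apply: allpairs_uniq; rewrite ?uniq_zbox //.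
  by apply: allpairs_uniq; rewrite ?uniq_partitions_upto // => [[a b] [c d]] _ _ /= [-> ->].
by move=> [[a b] [c d]] [[a' b'] [c' d']] _ _ /= [-> -> -> ->].
Qed.

Lemma solutions_are_candidates N x : 3 <= N -> LHSb N x || RHSb N x ->
  x \in candidates (absz N) (100 * absz N).
Proof.
case: x => [[[a b] c] d] hN; rewrite mem_candidates mem_zbox !mem_partitions_upto /psize /=.
have := binom2E c; have := binom2E d; have := abs_le_sq c; have := abs_le_sq d.
have [? ?] := abs_le_shift c; have [? ?] := abs_le_shift d.
by move=> ? ? ? ? /orP[] /and4P[-> -> _ /eqP]; rewrite /psize; lia.
Qed.

Definition residual (N : int) (m : seq nat * seq nat) : int :=
  N - 2 * (sumn m.1)%:Z - 22 * (sumn m.2)%:Z.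

Lemma count_LHS N K R : (count (LHSb N) (candidates K R))%:Z =
  \sum_(m <- partition_pairs K) (qf_count R (residual N m) (fun z => oddz (z.1 + z.2)))%:Z.
Proof.
rewrite count_sumz big_allpairs_dep; apply: eq_big_seq => -[a b].
rewrite mem_partition_pairs !mem_partitions_upto => /andP[/andP[pa _] /andP[pb _]].
rewrite /qf_count count_sumz; apply: eq_bigr => -[c d] _ /=.
rewrite pa pb /qf /oddz /psize /residual /=.
by have := binom2E c; have := binom2E d => e1 e2; congr (Posz (nat_of_bool _)); lia.
Qed.

Lemma count_RHS N K R : (count (RHSb N) (candidates K R))%:Z =
  \sum_(m <- partition_pairs K) (shifted_count R (residual N m))%:Z.
Proof.
rewrite count_sumz big_allpairs_dep; apply: eq_big_seq => -[a b].
rewrite mem_partition_pairs !mem_partitions_upto => /andP[/andP[pa _] /andP[pb _]].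
rewrite /shifted_count count_sumz; apply: eq_bigr => -[c d] _ /=.
rewrite pa pb /shifted_qf /oddz /psize /residual /=.
by have := binom2E c; have := binom2E d => e1 e2; congr (Posz (nat_of_bool _)); lia.
Qed.

(* Summed over the partitions, the signed pentagonal counts form the
   coefficient of q^(N-1) in the product of two Euler series (the second in
   q^11). *)
Lemma pent_signed_sum N K R :
  \sum_(m <- partition_pairs K) pent_signed R (residual N m - 1) =
  \sum_(x1 <- euler_domain R K) \sum_(x2 <- euler_domain R K)
    psign x1.1 * (psign x2.1 * (euler_weight x1 + 11 * euler_weight x2 == N - 1)%:Z).
Proof.
rewrite /partition_pairs /euler_domain !big_allpairs.
transitivity (\sum_(a <- partitions_upto K) \sum_(b <- partitions_upto K)
  \sum_(j <- zrange R) \sum_(j' <- zrange R) psign j * (psign j' *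
    (euler_weight (j, a) + 11 * euler_weight (j', b) == N - 1)%:Z)).
  apply: eq_bigr => a _; apply: eq_bigr => b _; rewrite /pent_signed /zbox big_allpairs.
  apply: eq_bigr => j _; apply: eq_bigr => j' _; rewrite psignD -mulrA /=.
  by congr (_ * (_ * (Posz (nat_of_bool _)))); rewrite /pent_qf /euler_weight /residual /=; lia.
under [LHS]eq_bigr => a _ do rewrite exchange_big.
under [LHS]eq_bigr => a _ do under eq_bigr => j _ do rewrite exchange_big.
rewrite [LHS]exchange_big; apply: eq_bigr => j _; apply: eq_bigr => a _.
by rewrite big_allpairs.
Qed.

(* The two counts agree: their difference is twice the coefficient of
   q^(N-1) in a product of two pentagonal series, which Euler's theorem
   evaluates to [N - 1 = 0] = 0. *)
Lemma counts_eq N : 3 <= N ->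
  count (LHSb N) (candidates (absz N) (100 * absz N)) =
  count (RHSb N) (candidates (absz N) (100 * absz N)).
Proof.
move=> hN; set n := absz N; set R := (100 * n)%N.
have hM : N - 1 <= 2 * n%:Z by rewrite /n; lia.
have hR : 2 * n%:Z <= R%:Z by rewrite /R; lia.
apply/eqP; rewrite -eqz_nat -subr_eq0 count_LHS count_RHS -sumrB; apply/eqP.
transitivity (2 * \sum_(m <- partition_pairs n) pent_signed R (residual N m - 1)).
  rewrite mulr_sumr; apply: eq_big_seq => -[a b].
  rewrite mem_partition_pairs !mem_partitions_upto => /andP[/andP[_ ha] /andP[_ hb]].
  by apply: lattice_identity; move: ha hb; rewrite /residual /R /n /=; lia.
rewrite pent_signed_sum.
under eq_bigr => x _ do
  rewrite -mulr_sumr (@euler_pentagonal_scaled R n 11 _ _ isT (euler_weight_ge0 x) hM hR).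
by rewrite euler_pentagonal //; lia.
Qed.

Theorem lemma3p12 (N : int) (hN : 3 <= N) :
  exists f : {x | LHS_set N x} -> {y | RHS_set N y}, bijective f.
Proof.
pose U := candidates (absz N) (100 * absz N).
apply: (@bij_of_lists _ _ _ (filter (LHSb N) U) (filter (RHSb N) U)).
- by rewrite filter_uniq ?uniq_candidates.
- by rewrite filter_uniq ?uniq_candidates.
- move=> x; rewrite mem_filter; split => [/LHS_setP Lx|/andP[/LHS_setP //]].
  by rewrite Lx solutions_are_candidates ?Lx.
- move=> y; rewrite mem_filter; split => [/RHS_setP Ry|/andP[/RHS_setP //]].
  by rewrite Ry solutions_are_candidates ?Ry ?orbT.
- by rewrite !size_filter counts_eq.
Qed.
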